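(* Let $\epsilon>0$ and suppose $h\in\operatorname{Isom}^0(\mathbb{E})$ is an $\epsilon$-hyperbolic affine isometry with linear part $g$. Then for all $\delta>0$ and all $x\in\mathbb{E}$, $$B\!\left(h(x),\frac{\delta\epsilon}{4}\right)\cap E^{wu}_{h(x)}(g)\subset h\big(B(x,\delta)\big).$$
   Context: $\mathbb{R}^{2,1}$ is $\mathbb{R}^3$ with $\mathbb{B}(u,v)=u_1v_1+u_2v_2-u_3v_3$; $\mathbb{E}$ is the affine space modelled on it; $\operatorname{Isom}^0(\mathbb{E})$ consists of maps $x\mapsto gx+b$ with $g\in\mathrm{SO}^0(2,1)$ (the linear part). $\rho$ is Euclidean distance and $B(x,\delta)$ the open Euclidean ball. Let $S^1=\{(\cos\phi,\sin\phi,1)\}$. A hyperbolic $g\in\mathrm{SO}^0(2,1)$ has eigenvalues $\lambda<1<\lambda^{-1}$; $x^-(g)$, $x^+(g)$ are the corresponding eigenvectors on $S^1$, and $x^0(g)$ is the eigenvector for $1$ with $\mathbb{B}(x^0(g),x^0(g))=1$ making $(x^-(g),x^+(g),x^0(g))$ positively oriented. $g$ is $\epsilon$-hyperbolic if $\rho(x^+(g),x^-(g))\ge\epsilon$; an affine isometry is $\epsilon$-hyperbolic if its linear part is. $E^{wu}(g)$ is the linear plane spanned by $x^0(g)$ and $x^+(g)$, and $E^{wu}_y(g)=y+E^{wu}(g)$ for $y\in\mathbb{E}$. *)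

From HB Require Import structures.
From mathcomp Require Import all_boot all_order all_algebra.
From mathcomp Require Import reals trigo.
From Stdlib Require Import ClassicalEpsilon.
Set Implicit Arguments. Unset Strict Implicit. Unset Printing Implicit Defensive.
Import Order.TTheory GRing.Theory Num.Theory.
Local Open Scope ring_scope.

Section Defs.
Variable R : realType.

(* Points of E and vectors of R^{2,1} are column vectors of size 3;
   coordinates (u_1,u_2,u_3) are u (inord 0) 0, u (inord 1) 0, u (inord 2) 0. *)
Notation V := 'cV[R]_3.
Definition c1 (u : V) := u (inord 0) 0.
Definition c2 (u : V) := u (inord 1) 0.
Definition c3 (u : V) := u (inord 2) 0.

Definition Bform (u v : V) : R := c1 u * c1 v + c2 u * c2 v - c3 u * c3 v.

Definition rho (u v : V) : R :=
  Num.sqrt ((c1 u - c1 v) ^+ 2 + (c2 u - c2 v) ^+ 2 + (c3 u - c3 v) ^+ 2).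

Definition ball (x : V) (d : R) : V -> Prop := fun y => rho x y < d.

Definition S1 (v : V) : Prop :=
  exists phi : R, c1 v = cos phi /\ c2 v = sin phi /\ c3 v = 1.

(* SO^0(2,1): linear maps preserving B, of determinant 1, and preserving
   the time orientation (identity component). *)
Definition SO021 (g : 'M[R]_3) : Prop :=
  (forall u v : V, Bform (g *m u) (g *m v) = Bform u v) /\
  \det g = 1 /\ 0 < g (inord 2) (inord 2).

Definition hyperbolic (g : 'M[R]_3) : Prop :=
  exists l : R, 0 < l < 1 /\
    (exists v : V, v != 0 /\ g *m v = l *: v) /\
    (exists w : V, w != 0 /\ g *m w = l^-1 *: w).

Definition is_xminus (g : 'M[R]_3) (v : V) : Prop :=
  S1 v /\ exists l : R, l < 1 /\ g *m v = l *: v.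
Definition is_xplus (g : 'M[R]_3) (v : V) : Prop :=
  S1 v /\ exists l : R, 1 < l /\ g *m v = l *: v.

Definition xminus (g : 'M[R]_3) : V := epsilon (inhabits 0) (is_xminus g).
Definition xplus (g : 'M[R]_3) : V := epsilon (inhabits 0) (is_xplus g).

Definition pos_oriented (a b c : V) : Prop :=
  0 < \det (row_mx a (row_mx b c)).

Definition is_xzero (g : 'M[R]_3) (v : V) : Prop :=
  g *m v = v /\ Bform v v = 1 /\ pos_oriented (xminus g) (xplus g) v.
Definition xzero (g : 'M[R]_3) : V := epsilon (inhabits 0) (is_xzero g).

Definition eps_hyperbolic (eps : R) (g : 'M[R]_3) : Prop :=
  hyperbolic g /\ eps <= rho (xplus g) (xminus g).

Definition Ewu (g : 'M[R]_3) (y : V) : V -> Prop :=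
  fun z => exists a b : R, z = y + a *: xzero g + b *: xplus g.

Definition affine (g : 'M[R]_3) (b : V) (x : V) : V := g *m x + b.

End Defs.

From HB Require Import structures.
From mathcomp Require Import all_boot all_order all_algebra.
From mathcomp Require Import reals trigo.
From mathcomp Require Import ring lra.
From Stdlib Require Import ClassicalEpsilon.
Set Implicit Arguments. Unset Strict Implicit. Unset Printing Implicit Defensive.
Import Order.TTheory GRing.Theory Num.Theory.
Local Open Scope ring_scope.

(* Write y = h(x) + a x^0 + c x^+; since h(x + w) = h(x) + g w, it suffices to
   find w with g w = a x^0 + c x^+ and |w| < delta.  Take w = a x^0 + (c/mu) x^+,
   where mu > 1 is the eigenvalue of x^+: it is a convex combination of
   u = a x^0 + c x^+ and a x^0, and |a| <= |u| because B(u, u) = a^2, so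
   |w| <= |u| |x^0|.  Being B-orthogonal to the null lines x^-, x^+, the vector
   x^0 satisfies rho(x^+, x^-)^2 |x^0|^2 = 8 - rho(x^+, x^-)^2 < 16, whence
   |w| < (delta eps / 4) |x^0| <= delta.  The fixed vector x^0 exists because
   g preserves the Lorentzian cross product of x^- and x^+ (det g = 1) and the
   eigenvalues of x^- and x^+ multiply to 1. *)

Section Coordinates.
Variable R : realType.
Local Notation V := 'cV[R]_3.
Implicit Types (u v w : V) (a b c k : R).

Lemma ord3P (i : 'I_3) : [\/ i = inord 0, i = inord 1 | i = inord 2].
Proof.
by case: i => [[|[|[|//]]] ?]; [apply: Or31 | apply: Or32 | apply: Or33];
  apply: val_inj; rewrite /= inordK.
Qed.

Lemma coords_inj u v : c1 u = c1 v -> c2 u = c2 v -> c3 u = c3 v -> u = v.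
Proof.
move=> e1 e2 e3; apply/matrixP => i j; rewrite (ord1 j).
by case: (ord3P i) => ->.
Qed.

Lemma c1Z k u : c1 (k *: u) = k * c1 u. Proof. by rewrite /c1 mxE. Qed.
Lemma c2Z k u : c2 (k *: u) = k * c2 u. Proof. by rewrite /c2 mxE. Qed.
Lemma c3Z k u : c3 (k *: u) = k * c3 u. Proof. by rewrite /c3 mxE. Qed.

Definition mkv a b c : V := \col_(i < 3) [:: a; b; c]`_i.

Lemma mkvE a b c :
  [/\ c1 (mkv a b c) = a, c2 (mkv a b c) = b & c3 (mkv a b c) = c].
Proof. by rewrite /c1 /c2 /c3 /mkv !mxE !inordK. Qed.

Lemma det_mx33 (A : 'M[R]_3) : \det A =
  A (inord 0) (inord 0) * (A (inord 1) (inord 1) * A (inord 2) (inord 2)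
                           - A (inord 1) (inord 2) * A (inord 2) (inord 1))
  - A (inord 0) (inord 1) * (A (inord 1) (inord 0) * A (inord 2) (inord 2)
                             - A (inord 1) (inord 2) * A (inord 2) (inord 0))
  + A (inord 0) (inord 2) * (A (inord 1) (inord 0) * A (inord 2) (inord 1)
                             - A (inord 1) (inord 1) * A (inord 2) (inord 0)).
Proof.
rewrite {1}(_ : A = \matrix_(i, j) A (inord i) (inord j)); last first.
  by apply/matrixP => i j; rewrite mxE !inord_val.
rewrite (expand_det_row _ ord0) !big_ord_recr big_ord0 /= add0r /cofactor.
rewrite !(expand_det_row _ ord0) !big_ord_recr !big_ord0 /= !add0r /cofactor.
rewrite !det_mx11 !mxE /= /bump /= !(addn0, add0n, addn1).
by rewrite !expr0 !expr1 expr2; ring.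
Qed.

Lemma row_mx3E u v w (i : 'I_3) :
  [/\ (row_mx u (row_mx v w) : 'M_3) i (inord 0) = u i 0,
      (row_mx u (row_mx v w) : 'M_3) i (inord 1) = v i 0 &
      (row_mx u (row_mx v w) : 'M_3) i (inord 2) = w i 0].
Proof.
have e0 : inord 0 = lshift (1 + 1) (0 : 'I_1) :> 'I_3
  by apply: val_inj; rewrite /= inordK.
have e1 : inord 1 = rshift 1 (lshift 1 (0 : 'I_1)) :> 'I_3
  by apply: val_inj; rewrite /= inordK.
have e2 : inord 2 = rshift 1 (rshift 1 (0 : 'I_1)) :> 'I_3
  by apply: val_inj; rewrite /= inordK.
rewrite e0 e1 e2 (@row_mxEl _ 3 1 (1 + 1)) !(@row_mxEr _ 3 1 (1 + 1)).
by rewrite (@row_mxEl _ 3 1 1) (@row_mxEr _ 3 1 1).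
Qed.

End Coordinates.

Section LorentzForm.
Variable R : realType.
Local Notation V := 'cV[R]_3.
Implicit Types (u v w : V) (a b k l : R).

Definition preserves_Bform (g : 'M[R]_3) :=
  forall u v : V, Bform (g *m u) (g *m v) = Bform u v.

Lemma BformZl k u v : Bform (k *: u) v = k * Bform u v.
Proof. by rewrite /Bform /c1 /c2 /c3 !mxE; ring. Qed.

Lemma BformZr k u v : Bform u (k *: v) = k * Bform u v.
Proof. by rewrite /Bform /c1 /c2 /c3 !mxE; ring. Qed.

Lemma BformBl u v w : Bform (u - v) w = Bform u w - Bform v w.
Proof. by rewrite /Bform /c1 /c2 /c3 !mxE; ring. Qed.

Lemma Bform_comb a b u v :
  Bform (a *: u + b *: v) (a *: u + b *: v) =
  a ^+ 2 * Bform u u + 2 * a * b * Bform u v + b ^+ 2 * Bform v v.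
Proof. by rewrite /Bform /c1 /c2 /c3 !mxE; ring. Qed.

Lemma Bform_nondeg u : (forall w, Bform u w = 0) -> u = 0.
Proof.
move=> uB.
have [x1 x2 x3] := mkvE 1 0 (0 : R); have [y1 y2 y3] := mkvE 0 1 (0 : R).
have [z1 z2 z3] := mkvE 0 0 (1 : R).
have := uB (mkv 1 0 0); have := uB (mkv 0 1 0); have := uB (mkv 0 0 1).
rewrite /Bform x1 x2 x3 y1 y2 y3 z1 z2 z3 => h3 h2 h1.
by apply: coords_inj; rewrite [X in _ = X]mxE; lra.
Qed.

Lemma eigen_Bform_orth g u v k l : preserves_Bform g ->
  g *m u = k *: u -> g *m v = l *: v -> k * l != 1 -> Bform u v = 0.
Proof.
move=> gB gu gv kl1; have := gB u v; rewrite gu gv BformZl BformZr mulrA.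
move/eqP; rewrite -subr_eq0 -{2}[Bform u v]mul1r -mulrBl mulf_eq0 subr_eq0.
by rewrite (negbTE kl1) => /eqP.
Qed.

End LorentzForm.

Section LorentzCross.
Variable R : realType.
Local Notation V := 'cV[R]_3.
Implicit Types (u v w : V) (k l : R).

(* The Euclidean cross product with its last coordinate negated, so that
   B (lcross u v) w is the determinant of the columns u, v, w. *)
Definition lcross u v : V :=
  mkv (c2 u * c3 v - c3 u * c2 v) (c3 u * c1 v - c1 u * c3 v)
      (c2 u * c1 v - c1 u * c2 v).

Lemma lcrossE u v :
  [/\ c1 (lcross u v) = c2 u * c3 v - c3 u * c2 v,
      c2 (lcross u v) = c3 u * c1 v - c1 u * c3 v &
      c3 (lcross u v) = c2 u * c1 v - c1 u * c2 v].
Proof. exact: mkvE. Qed.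

Lemma det_row_mx3 u v w : \det (row_mx u (row_mx v w)) = Bform (lcross u v) w.
Proof.
rewrite det_mx33.
have [a1 a2 a3] := row_mx3E u v w (inord 0).
have [b1 b2 b3] := row_mx3E u v w (inord 1).
have [d1 d2 d3] := row_mx3E u v w (inord 2).
have [e1 e2 e3] := lcrossE u v.
rewrite a1 a2 a3 b1 b2 b3 d1 d2 d3 /Bform e1 e2 e3 /c1 /c2 /c3; ring.
Qed.

Lemma lcrossZ k l u v : lcross (k *: u) (l *: v) = (k * l) *: lcross u v.
Proof.
apply/matrixP => i j; rewrite /lcross /c1 /c2 /c3 !mxE.
by case: (ord3P i) => ->; rewrite inordK //=; ring.
Qed.

Lemma Bform_lcross_self u v :
  Bform (lcross u v) (lcross u v) = Bform u v ^+ 2 - Bform u u * Bform v v.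
Proof. by have [e1 e2 e3] := lcrossE u v; rewrite /Bform e1 e2 e3; ring. Qed.

Lemma lcross_equivariant g u v : preserves_Bform g -> \det g = 1 ->
  g *m lcross u v = lcross (g *m u) (g *m v).
Proof.
move=> gB detg; apply/eqP; rewrite -subr_eq0; apply/eqP.
apply: Bform_nondeg => w.
have g_unit : g \in unitmx by rewrite unitmxE detg unitr1.
rewrite -[w](mulKVmx g_unit) BformBl gB -!det_row_mx3 -!mul_mx_row.
by rewrite det_mulmx detg mul1r subrr.
Qed.

End LorentzCross.

Section EuclideanNorm.
Variable R : realType.
Local Notation V := 'cV[R]_3.
Implicit Types (u v : V) (k : R).

Definition edot u v := c1 u * c1 v + c2 u * c2 v + c3 u * c3 v.
Definition enorm u := Num.sqrt (edot u u).

Lemma edot_ge0 u : 0 <= edot u u.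
Proof. by rewrite /edot; nra. Qed.

Lemma enorm_ge0 u : 0 <= enorm u.
Proof. exact: sqrtr_ge0. Qed.

Lemma sqr_enorm u : enorm u ^+ 2 = edot u u.
Proof. exact/sqr_sqrtr/edot_ge0. Qed.

Lemma rhoE u v : rho u v = enorm (v - u).
Proof. by rewrite /rho /enorm /edot /c1 /c2 /c3 !mxE; congr Num.sqrt; ring. Qed.

Lemma rhoC u v : rho u v = rho v u.
Proof. by rewrite /rho; congr Num.sqrt; ring. Qed.

Lemma enormZ k u : enorm (k *: u) = `|k| * enorm u.
Proof.
rewrite /enorm -sqrtr_sqr -sqrtrM ?sqr_ge0 //; congr Num.sqrt.
by rewrite /edot /c1 /c2 /c3 !mxE; ring.
Qed.

Lemma edot_le_enorm u v : edot u v <= enorm u * enorm v.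
Proof.
rewrite /enorm -sqrtrM ?edot_ge0 // (le_trans (ler_norm _)) // -sqrtr_sqr.
apply: ler_wsqrtr; rewrite /edot.
set x1 := c1 u; set x2 := c2 u; set x3 := c3 u.
set y1 := c1 v; set y2 := c2 v; set y3 := c3 v.
have -> : (x1 * x1 + x2 * x2 + x3 * x3) * (y1 * y1 + y2 * y2 + y3 * y3) =
  (x1 * y1 + x2 * y2 + x3 * y3) ^+ 2
  + ((x1 * y2 - x2 * y1) ^+ 2 + (x1 * y3 - x3 * y1) ^+ 2
     + (x2 * y3 - x3 * y2) ^+ 2) by ring.
by rewrite lerDl !addr_ge0 ?sqr_ge0.
Qed.

Lemma enormD u v : enorm (u + v) <= enorm u + enorm v.
Proof.
rewrite -ler_sqr ?nnegrE ?addr_ge0 ?enorm_ge0 // sqr_enorm.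
have -> : edot (u + v) (u + v) = edot u u + 2 * edot u v + edot v v
  by rewrite /edot /c1 /c2 /c3 !mxE; ring.
have := edot_le_enorm u v; rewrite -!sqr_enorm; nra.
Qed.

Lemma Bform_le_sqr_enorm u : Bform u u <= enorm u ^+ 2.
Proof. by rewrite sqr_enorm /Bform /edot; nra. Qed.

End EuclideanNorm.

Section Circle.
Variable R : realType.
Local Notation V := 'cV[R]_3.
Implicit Types (m p v w : V).

Lemma S1E v : S1 v -> c1 v ^+ 2 + c2 v ^+ 2 = 1 /\ c3 v = 1.
Proof. by case=> phi [-> [-> ->]]; rewrite cos2Dsin2. Qed.

Lemma S1_Bform_null v : S1 v -> Bform v v = 0.
Proof. by move=> /S1E [v12 v3]; rewrite /Bform v3; lra. Qed.

Lemma Bform_S1 m p : S1 m -> S1 p -> Bform m p = - rho m p ^+ 2 / 2.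
Proof.
move=> /S1E [m12 m3] /S1E [p12 p3].
rewrite /rho sqr_sqrtr; last by rewrite !addr_ge0 ?sqr_ge0.
rewrite /Bform m3 p3 (_ : (c1 m - c1 p) ^+ 2 + _ + _ =
  c1 m ^+ 2 + c2 m ^+ 2 + (c1 p ^+ 2 + c2 p ^+ 2)
  - 2 * (c1 m * c1 p + c2 m * c2 p)); last by ring.
by rewrite m12 p12; field.
Qed.

Lemma S1_scale_null w : w != 0 -> Bform w w = 0 -> exists k : R, S1 (k *: w).
Proof.
rewrite /Bform => w0 /eqP; rewrite subr_eq0 => /eqP w_null.
have w3 : c3 w != 0.
  apply/eqP => w3; apply/(negP w0)/eqP; move: w_null; rewrite w3 mulr0 => w12.
  by apply: coords_inj; rewrite [X in _ = X]mxE; nra.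
exists (c3 w)^-1; rewrite /S1 c1Z c2Z c3Z mulVf //.
set a := (c3 w)^-1 * c1 w; set b := (c3 w)^-1 * c2 w.
have ab : a ^+ 2 + b ^+ 2 = 1.
  have -> : a ^+ 2 + b ^+ 2 = (c1 w * c1 w + c2 w * c2 w) / (c3 w * c3 w)
    by rewrite /a /b; field.
  by rewrite w_null divff // mulf_neq0.
have a_itv : a \in `[(-1), 1] by rewrite in_itv /=; apply/andP; split; nra.
have sin_acos_a : sin (acos a) = `|b|.
  by rewrite sin_acos // -sqrtr_sqr; congr Num.sqrt; lra.
have [b_ge0 | b_lt0] := lerP 0 b.
- by exists (acos a); rewrite acosK // sin_acos_a ger0_norm.
- by exists (- acos a); rewrite cosN sinN acosK // sin_acos_a ltr0_norm ?opprK.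
Qed.

Lemma sqr_rho_S1 m p : S1 m -> S1 p ->
  rho m p ^+ 2 = (c1 m - c1 p) ^+ 2 + (c2 m - c2 p) ^+ 2.
Proof.
move=> /S1E [_ m3] /S1E [_ p3].
by rewrite /rho sqr_sqrtr ?m3 ?p3 ?subrr ?expr0n ?addr0 // addr_ge0 ?sqr_ge0.
Qed.

(* With d := m - p and s := m + p in the plane c3 = 0, the planar part w of v
   satisfies w.d = 0 and w.s = 2 c3 v; expanding |w|^2 in the orthogonal pair
   (d, s) determines c3 v ^+ 2, hence the Euclidean norm of v. *)
Lemma sqr_rho_enorm_Borth m p v : S1 m -> S1 p -> 0 < rho m p ->
  Bform v m = 0 -> Bform v p = 0 -> Bform v v = 1 ->
  (rho m p * enorm v) ^+ 2 = 8 - rho m p ^+ 2.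
Proof.
move=> Sm Sp rho_gt0; have [m12 m3] := S1E Sm; have [p12 p3] := S1E Sp.
have r2_gt0 : 0 < rho m p ^+ 2 by rewrite exprn_gt0.
rewrite exprMn sqr_enorm /edot sqr_rho_S1 // in r2_gt0 *.
rewrite /Bform m3 p3 !mulr1 => vm vp vv.
set r2 := _ + (c2 m - c2 p) ^+ 2 in r2_gt0 *.
set d1 := c1 m - c1 p; set d2 := c2 m - c2 p.
set s1 := c1 m + c1 p; set s2 := c2 m + c2 p.
set v1 := c1 v in vm vp vv *; set v2 := c2 v in vm vp vv *.
set v3 := c3 v in vm vp vv *.
have wd : v1 * d1 + v2 * d2 = 0.
  have -> : v1 * d1 + v2 * d2 =
    (v1 * c1 m + v2 * c2 m - v3) - (v1 * c1 p + v2 * c2 p - v3)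
    by rewrite /d1 /d2; ring.
  by rewrite vm vp subrr.
have ws : v1 * s1 + v2 * s2 = 2 * v3.
  have -> : v1 * s1 + v2 * s2 =
    (v1 * c1 m + v2 * c2 m - v3) + (v1 * c1 p + v2 * c2 p - v3) + 2 * v3
    by rewrite /s1 /s2; ring.
  by rewrite vm vp !add0r.
have ds : d1 * s1 + d2 * s2 = 0.
  have -> : d1 * s1 + d2 * s2 = (c1 m ^+ 2 + c2 m ^+ 2) - (c1 p ^+ 2 + c2 p ^+ 2)
    by rewrite /d1 /d2 /s1 /s2; ring.
  by rewrite m12 p12 subrr.
have ss : s1 ^+ 2 + s2 ^+ 2 = 4 - r2.
  have -> : s1 ^+ 2 + s2 ^+ 2 =
    2 * (c1 m ^+ 2 + c2 m ^+ 2) + 2 * (c1 p ^+ 2 + c2 p ^+ 2) - r2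
    by rewrite /s1 /s2 /r2; ring.
  by rewrite m12 p12; ring.
have ww : v1 ^+ 2 + v2 ^+ 2 = 1 + v3 ^+ 2 by rewrite -vv; ring.
have planar : r2 * (s1 ^+ 2 + s2 ^+ 2) * (v1 ^+ 2 + v2 ^+ 2) =
  (d1 * s1 + d2 * s2) ^+ 2 * (v1 ^+ 2 + v2 ^+ 2)
  + (s1 ^+ 2 + s2 ^+ 2) * (v1 * d1 + v2 * d2) ^+ 2
  - 2 * (d1 * s1 + d2 * s2) * (v1 * d1 + v2 * d2) * (v1 * s1 + v2 * s2)
  + r2 * (v1 * s1 + v2 * s2) ^+ 2 by rewrite /r2 /d1 /d2; ring.
rewrite wd ws ds ss ww in planar.
have v3E : r2 * v3 ^+ 2 = 4 - r2.
  apply: (mulfI (lt0r_neq0 r2_gt0)); move: planar; rewrite /r2; lra.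
rewrite -!expr2 (_ : r2 * _ = r2 + 2 * (r2 * v3 ^+ 2)
  + r2 * (v1 ^+ 2 + v2 ^+ 2 - 1 - v3 ^+ 2)); last by ring.
by rewrite v3E ww; ring.
Qed.

End Circle.

Section HyperbolicIsometry.
Variables (R : realType) (g : 'M[R]_3).
Local Notation V := 'cV[R]_3.
Hypothesis gB : preserves_Bform g.

Lemma S1_eigenvector (w : V) k : w != 0 -> g *m w = k *: w -> k ^+ 2 != 1 ->
  exists2 v, S1 v & g *m v = k *: v.
Proof.
move=> w0 gw; rewrite expr2 => kk_neq1.
have [c Scw] := S1_scale_null w0 (eigen_Bform_orth gB gw gw kk_neq1).
by exists (c *: w); rewrite // -scalemxAr gw !scalerA mulrC.
Qed.

Lemma is_xplus_xplus : hyperbolic g -> is_xplus g (xplus g).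
Proof.
case=> l [/andP [l_gt0 l_lt1] [_ [w [w0 gw]]]]; apply: epsilon_spec.
have l_gt1 : 1 < l^-1 by rewrite invf_gt1.
have [|v Sv gv] := S1_eigenvector w0 gw; first by rewrite gt_eqF //; nra.
by exists v; split => //; exists l^-1.
Qed.

Lemma is_xminus_xminus : hyperbolic g -> is_xminus g (xminus g).
Proof.
case=> l [/andP [l_gt0 l_lt1] [[w [w0 gw]] _]]; apply: epsilon_spec.
have [|v Sv gv] := S1_eigenvector w0 gw; first by rewrite lt_eqF //; nra.
by exists v; split => //; exists l.
Qed.

Lemma fixed_unit_vector (m p : V) lm mu : \det g = 1 ->
  Bform m m = 0 -> Bform p p = 0 -> Bform m p < 0 ->
  g *m m = lm *: m -> g *m p = mu *: p ->
  exists x0 : V, [/\ g *m x0 = x0, Bform x0 x0 = 1 & pos_oriented m p x0].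
Proof.
move=> detg Bmm Bpp Bmp_lt0 gm gp.
have lmmu : lm * mu = 1.
  apply: contraTeq (ltr0_neq0 Bmp_lt0).
  by move=> /(eigen_Bform_orth gB gm gp) ->; rewrite eqxx.
exists ((- Bform m p)^-1 *: lcross m p); split.
- by rewrite -scalemxAr lcross_equivariant // gm gp lcrossZ lmmu scale1r.
- rewrite BformZl BformZr Bform_lcross_self Bmm Bpp; field.
  by rewrite ltr0_neq0.
- rewrite /pos_oriented (det_row_mx3 m p) BformZr Bform_lcross_self Bmm Bpp.
  rewrite mulr0 subr0.
  rewrite (_ : _ * _ = - Bform m p); first by rewrite oppr_gt0.
  by field; rewrite ltr0_neq0.
Qed.

Lemma is_xzero_xzero : \det g = 1 -> hyperbolic g ->
  0 < rho (xminus g) (xplus g) -> is_xzero g (xzero g).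
Proof.
move=> detg hyp rho_gt0; apply: epsilon_spec.
have [Sm [lm [_ gm]]] := is_xminus_xminus hyp.
have [Sp [mu [_ gp]]] := is_xplus_xplus hyp.
have Bmp_lt0 : Bform (xminus g) (xplus g) < 0.
  by rewrite Bform_S1 // mulNr oppr_lt0 divr_gt0 // exprn_gt0.
have [x0 [gx0 Bx0 pos]] := fixed_unit_vector detg (S1_Bform_null Sm)
  (S1_Bform_null Sp) Bmp_lt0 gm gp.
by exists x0.
Qed.

End HyperbolicIsometry.

Section WeakUnstablePreimage.
Variable R : realType.
Local Notation V := 'cV[R]_3.

(* The preimage a x0 + (c / mu) p is the convex combination
   t (a x0 + c p) + (1 - t) a x0 with t = 1 / mu, and |a| is controlled by
   the Lorentzian length a ^+ 2 of a x0 + c p. *)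
Lemma weak_unstable_preimage (g : 'M[R]_3) (x0 p : V) mu a c :
  g *m x0 = x0 -> g *m p = mu *: p -> 1 < mu ->
  Bform x0 x0 = 1 -> Bform x0 p = 0 -> Bform p p = 0 ->
  exists2 w, g *m w = a *: x0 + c *: p &
    enorm w <= enorm (a *: x0 + c *: p) * enorm x0.
Proof.
move=> gx0 gp mu_gt1 Bx0 Bx0p Bpp.
set u := a *: x0 + c *: p; set t := mu^-1.
have mu_neq0 : mu != 0 by rewrite gt_eqF //; lra.
have t_gt0 : 0 < t by rewrite invr_gt0; lra.
have t_lt1 : t < 1 by rewrite invf_lt1 //; lra.
have a_le : `|a| <= enorm u.
  rewrite -ler_sqr ?nnegrE ?enorm_ge0 // real_normK ?num_real //.
  apply: le_trans (Bform_le_sqr_enorm u).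
  by rewrite Bform_comb Bx0 Bx0p Bpp !mulr0 mulr1 !addr0.
have x0_ge1 : 1 <= enorm x0.
  rewrite -ler_sqr ?nnegrE ?enorm_ge0 // expr1n -Bx0; exact: Bform_le_sqr_enorm.
exists (a *: x0 + (c / mu) *: p).
  by rewrite mulmxDr -!scalemxAr gx0 gp scalerA divfK.
have -> : a *: x0 + (c / mu) *: p = t *: u + (1 - t) *: (a *: x0).
  by apply/matrixP => i j; rewrite !mxE /t; field.
apply: (le_trans (enormD _ _)).
rewrite !enormZ (ger0_norm (ltW t_gt0)) (@ger0_norm _ (1 - t)); last first.
  by rewrite subr_ge0 ltW.
have u_ge0 := enorm_ge0 u.
have h1 : t * enorm u <= t * (enorm u * enorm x0).
  by apply: ler_wpM2l; [exact: ltW | rewrite ler_peMr].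
have h2 : (1 - t) * (`|a| * enorm x0) <= (1 - t) * (enorm u * enorm x0).
  apply: ler_wpM2l; first by rewrite subr_ge0 ltW.
  by apply: ler_wpM2r => //; apply: le_trans x0_ge1.
lra.
Qed.

End WeakUnstablePreimage.

Theorem mainTheorem4 (R : realType) (eps : R) (g : 'M[R]_3) (b : 'cV[R]_3) :
  0 < eps -> SO021 g -> eps_hyperbolic eps g ->
  forall (delta : R) (x : 'cV[R]_3), 0 < delta ->
  forall y : 'cV[R]_3,
    ball (affine g b x) (delta * eps / 4) y -> Ewu g (affine g b x) y ->
    exists z : 'cV[R]_3, ball x delta z /\ affine g b z = y.
Proof.
move=> eps_gt0 [gB [detg _]] [hyp eps_le] delta x delta_gt0 y hy [a [c yE]].
have [Sp [mu [mu_gt1 gp]]] := is_xplus_xplus gB hyp.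
have [Sm [lm [lm_lt1 gm]]] := is_xminus_xminus gB hyp.
have rho_gt0 : 0 < rho (xplus g) (xminus g) := lt_le_trans eps_gt0 eps_le.
have [gx0 [Bx0 _]] : is_xzero g (xzero g).
  by apply: is_xzero_xzero; rewrite // rhoC.
have Borth u k : g *m u = k *: u -> k != 1 -> Bform (xzero g) u = 0.
  move=> gu k_neq1; apply: (eigen_Bform_orth (k := 1) gB _ gu).
    by rewrite scale1r.
  by rewrite mul1r.
have Bx0p := Borth _ _ gp (negbT (gt_eqF mu_gt1)).
have Bx0m := Borth _ _ gm (negbT (lt_eqF lm_lt1)).
have x0_bound : rho (xplus g) (xminus g) * enorm (xzero g) < 4.
  rewrite -ltr_sqr ?nnegrE ?mulr_ge0 ?enorm_ge0 ?sqrtr_ge0 //.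
  rewrite sqr_rho_enorm_Borth //.
  by have := sqr_ge0 (rho (xplus g) (xminus g)); lra.
have [w gw w_le] := weak_unstable_preimage a c gx0 gp mu_gt1 Bx0 Bx0p
  (S1_Bform_null Sp).
exists (x + w); split; last by rewrite /affine mulmxDr gw yE addrAC addrA.
have N_lt : enorm (a *: xzero g + c *: xplus g) < delta * eps / 4.
  move: hy; rewrite /ball rhoE yE.
  by rewrite -[X in X - _]addrA [X in enorm X]addrC addKr.
rewrite /ball rhoE [x + w]addrC addrK (le_lt_trans w_le) //.
have := ler_wpM2r (enorm_ge0 (xzero g)) (ltW N_lt).
have := ler_wpM2r (enorm_ge0 (xzero g)) eps_le.
nra.
Qed.
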